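(* In the setting of the context, the multiplication maps $A\otimes_kB\to C$, $a\otimes b\mapsto ab$, and $B\otimes_kA\to C$, $b\otimes a\mapsto ba$, are linear isomorphisms.
   Context: $k$ is a field; $C_R(S)=\{r\in R:rs=sr\ \forall s\in S\}$. $N\subseteq M$ is a strongly separable, irreducible extension of $k$-algebras: $C_M(N)=k1$ and there are an $N$-bimodule map $E:M\to N$ and $x_1,\dots,x_n,y_1,\dots,y_n\in M$ with $\sum_iE(mx_i)y_i=m=\sum_ix_iE(y_im)$ for all $m\in M$, $E(1)\neq0$, $\sum_ix_iy_i\neq0$; normalized so that $E(1)=1$, whence $\sum_ix_iy_i=\lambda^{-1}1$ with $0\neq\lambda\in k$. Basic construction: given $S\subseteq R$, an $S$-bimodule map $E_S:R\to S$ with $E_S(1)=1$ and $r_i,s_i\in R$ with $\sum_iE_S(rr_i)s_i=r=\sum_ir_iE_S(s_ir)$ and $\sum_ir_is_i=\lambda^{-1}1$, set $R_1=R\otimes_SR$ with product $(a\otimes b)(c\otimes d)=aE_S(bc)\otimes d$, unit $\sum_ir_i\otimes s_i$, $R\subseteq R_1$ via $r\mapsto\sum_irr_i\otimes s_i$, $e=1\otimes1$, $E_R:R_1\to R$, $a\otimes b\mapsto\lambda ab$; then $E_R$, $\lambda^{-1}r_i\otimes1$, $1\otimes s_i$ satisfy the same conditions with the same $\lambda$. From $(N\subseteq M,E)$ get $M_1,e_1,E_M$; from $(M\subseteq M_1,E_M)$ get $M_2,e_2,E_{M_1}$. Let $A=C_{M_1}(N)$, $B=C_{M_2}(M)$,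 $C=C_{M_2}(N)$ (so $A,B\subseteq C$). Depth 2 is assumed: $M_1$ is free as right $M$-module with basis in $A$, $M_2$ free as right $M_1$-module with basis in $B$. *)

From HB Require Import structures.
From mathcomp Require Import all_boot all_order all_algebra.
Set Implicit Arguments. Unset Strict Implicit. Unset Printing Implicit Defensive.
Import GRing.Theory.
Local Open Scope ring_scope.

Definition klinear (k : fieldType) (U V : lmodType k) (f : U -> V) : Prop :=
  forall (c : k) (u v : U), f (c *: u + v) = c *: f u + f v.

Definition kbilinear_on (k : fieldType) (V W T : lmodType k)
    (P : V -> Prop) (Q : W -> Prop) (t : V -> W -> T) : Prop :=
  (forall (c : k) a a' b, P a -> P a' -> Q b ->
      t (c *: a + a') b = c *: t a b + t a' b) /\
  (forall (c : k) a b b', P a -> Q b -> Q b' ->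
      t a (c *: b + b') = c *: t a b + t a b').

Definition is_tensor_on (k : fieldType) (V W T : lmodType k)
    (P : V -> Prop) (Q : W -> Prop) (t : V -> W -> T) : Prop :=
  kbilinear_on P Q t /\
  (forall (U : lmodType k) (f : V -> W -> U), kbilinear_on P Q f ->
     exists g : T -> U, klinear g /\
       forall a b, P a -> Q b -> g (t a b) = f a b) /\
  (forall (U : lmodType k) (g1 g2 : T -> U), klinear g1 -> klinear g2 ->
     (forall a b, P a -> Q b -> g1 (t a b) = g2 (t a b)) ->
     forall z, g1 z = g2 z).

Definition balanced_over (k : fieldType) (V : lalgType k) (U : lmodType k)
    (S : V -> Prop) (f : V -> V -> U) : Prop :=
  forall s a b, S s -> f (a * s) b = f a (s * b).

Definition is_balanced_tensor (k : fieldType) (V : lalgType k) (T : lmodType k)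
    (S : V -> Prop) (t : V -> V -> T) : Prop :=
  kbilinear_on (fun _ => True) (fun _ => True) t /\ balanced_over S t /\
  (forall (U : lmodType k) (f : V -> V -> U),
     kbilinear_on (fun _ => True) (fun _ => True) f -> balanced_over S f ->
     exists g : T -> U, klinear g /\ forall a b, g (t a b) = f a b) /\
  (forall (U : lmodType k) (g1 g2 : T -> U), klinear g1 -> klinear g2 ->
     (forall a b, g1 (t a b) = g2 (t a b)) -> forall z, g1 z = g2 z).

(* Inclusion R -> R_1 = R (x)_S R of the basic construction:
   r |-> sum_i r r_i (x) s_i. *)
Definition bc_incl (k : fieldType) (V : lalgType k) (W : lmodType k) (n : nat)
    (t : V -> V -> W) (r s : 'I_n -> V) (v : V) : W :=
  \sum_(i < n) t (v * r i) (s i).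

Definition centralizer (V : pzRingType) (S : V -> Prop) (v : V) : Prop :=
  forall s, S s -> v * s = s * v.

(* R_1 is free as a right R-module (R acting through phi : R -> R_1)
   with basis b (indexed by an arbitrary type I). *)
Definition free_right_basis (R V : pzRingType) (phi : R -> V) (I : eqType)
    (b : I -> V) : Prop :=
  (forall u : V, exists (s : seq I) (c : I -> R),
      u = \sum_(i <- s) b i * phi (c i)) /\
  (forall (s : seq I) (c : I -> R), uniq s ->
      \sum_(i <- s) b i * phi (c i) = 0 -> forall i, i \in s -> c i = 0).

From HB Require Import structures.
From mathcomp Require Import all_boot all_order all_algebra.
Import GRing.Theory.
Local Open Scope ring_scope.
Set Implicit Arguments. Unset Strict Implicit. Unset Printing Implicit Defensive.

(* The basic construction of a strongly separable extension S ⊆ R with dual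
   bases (r_i, s_i) is again strongly separable, with dual bases
   (λ⁻¹ r_i ⊗ 1, 1 ⊗ s_i), and irreducibility lifts: C_{R_1}(R) = k.
   Applying this twice, the expectation E_{M_1} : M_2 → M_1 maps
   B = C_{M_2}(M) into C_{M_1}(M) = k.  Expanding the dual basis of M_2 over
   M_1 in the depth-2 basis b_i ∈ B gives w = Σ_i b_i E_{M_1}(D_i w) with
   D_i ∈ B, where freeness of the b_i forces D_i to commute with M.  For
   w ∈ C the coefficients E_{M_1}(D_i w) lie in A, so
   w ↦ Σ_i b_i ⊗ E_{M_1}(D_i w) inverts multiplication B ⊗ A → C; the
   mirrored expansion w = Σ_i E_{M_1}(w b_i) D_i handles A ⊗ B → C. *)

Section LinearOn.
Variable k : fieldType.

Definition subspace (U : lmodType k) (P : U -> Prop) :=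
  P 0 /\ forall (c : k) u v, P u -> P v -> P (c *: u + v).

Definition linear_on (U V : lmodType k) (P : U -> Prop) (f : U -> V) :=
  forall (c : k) u v, P u -> P v -> f (c *: u + v) = c *: f u + f v.

Lemma subspace_sum (U : lmodType k) (P : U -> Prop) (I : Type) (s : seq I)
    (F : I -> U) :
  subspace P -> (forall i, P (F i)) -> P (\sum_(i <- s) F i).
Proof.
move=> [P0 Plin] PF; apply: big_ind => // u v Pu Pv.
by rewrite -[u]scale1r; apply: Plin.
Qed.

Section LinearOnSubspace.
Variables (U V : lmodType k) (P : U -> Prop) (f : U -> V).
Hypotheses (hP : subspace P) (hf : linear_on P f).

Lemma linear_on0 : f 0 = 0.
Proof.
have P0 := hP.1; have := hf 1 P0 P0; rewrite !scale1r !addr0 => f00.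
by apply: (addrI (f 0)); rewrite addr0 -f00.
Qed.

Lemma linear_onD u v : P u -> P v -> f (u + v) = f u + f v.
Proof. by move=> Pu Pv; have := hf 1 Pu Pv; rewrite !scale1r. Qed.

Lemma linear_onZ (c : k) u : P u -> f (c *: u) = c *: f u.
Proof.
by move=> Pu; rewrite -[c *: u]addr0 hf ?linear_on0 ?addr0 //; case: hP.
Qed.

Lemma linear_on_sum (I : Type) (s : seq I) (F : I -> U) :
  (forall i, P (F i)) -> f (\sum_(i <- s) F i) = \sum_(i <- s) f (F i).
Proof.
move=> PF; elim: s => [|a s IH]; first by rewrite !big_nil linear_on0.
by rewrite !big_cons linear_onD ?IH //; apply: subspace_sum.
Qed.

End LinearOnSubspace.

Section KLinear.
Variables (U V : lmodType k) (f : U -> V).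
Hypothesis hf : klinear f.

Lemma klinearD u v : f (u + v) = f u + f v.
Proof. exact: (GRing.semilinear_linear (hf : linear f)).2. Qed.

Lemma klinearB u v : f (u - v) = f u - f v.
Proof. exact: (zmod_morphism_linear (hf : linear f)). Qed.

Lemma klinear0 : f 0 = 0.
Proof. by rewrite -(subrr 0) klinearB subrr. Qed.

Lemma klinearZ (c : k) u : f (c *: u) = c *: f u.
Proof. exact: (scalable_linear (hf : linear f)). Qed.

Lemma klinear_sum (I : Type) (s : seq I) (F : I -> U) :
  f (\sum_(i <- s) F i) = \sum_(i <- s) f (F i).
Proof. exact: (big_morph f klinearD klinear0). Qed.

End KLinear.

Lemma klinear_comp (U V W : lmodType k) (f : U -> V) (g : V -> W) :
  klinear f -> klinear g -> klinear (fun u => g (f u)).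
Proof. by move=> hf hg c u v; rewrite hf hg. Qed.

Lemma klinear_mull (V : algType k) (a : V) : klinear (fun v : V => a * v).
Proof. by move=> c u v; rewrite mulrDr scalerAr. Qed.

Lemma klinear_mulr (V : algType k) (a : V) : klinear (fun v : V => v * a).
Proof. by move=> c u v; rewrite mulrDl scalerAl. Qed.

Lemma klinear_sumf (U V : lmodType k) (I : Type) (s : seq I) (f : I -> U -> V) :
  (forall i, klinear (f i)) -> klinear (fun u => \sum_(i <- s) f i u).
Proof.
move=> hf c u v; rewrite scaler_sumr -big_split /=.
by apply: eq_bigr => i _; rewrite hf.
Qed.

End LinearOn.

Section Centralizer.
Variables (k : fieldType) (V : algType k).
Implicit Types (S : V -> Prop) (u v : V).

Lemma centralizer_subspace S : subspace (centralizer S).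
Proof.
split=> [s _|c u v cu cv s Ss]; first by rewrite mul0r mulr0.
by rewrite mulrDl mulrDr -scalerAl -scalerAr cu // cv.
Qed.

Lemma centralizerM S u v :
  centralizer S u -> centralizer S v -> centralizer S (u * v).
Proof. by move=> cu cv s Ss; rewrite -mulrA cv // mulrA cu // mulrA. Qed.

Lemma centralizer_scalar S (c : k) : centralizer S c%:A.
Proof. by move=> s _; rewrite mulr_algl mulr_algr. Qed.

Lemma centralizerS S S' v :
  (forall s, S' s -> S s) -> centralizer S v -> centralizer S' v.
Proof. by move=> sS'S cv s /sS'S; apply: cv. Qed.

End Centralizer.

Section TensorOn.
Variables (k : fieldType) (U V T : lmodType k).
Variables (P : U -> Prop) (Q : V -> Prop) (t : U -> V -> T).

Lemma kbilinear_on_linl q :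
  kbilinear_on P Q t -> Q q -> linear_on P (fun p => t p q).
Proof. by move=> [tl _] Qq c p p' Pp Pp'; apply: tl. Qed.

Lemma kbilinear_on_linr p : kbilinear_on P Q t -> P p -> linear_on Q (t p).
Proof. by move=> [_ tr] Pp c q q' Qq Qq'; apply: tr. Qed.

Lemma tensor_on_centralizer (W : algType k) (S : W -> Prop) (g : T -> W) :
  is_tensor_on P Q t -> klinear g ->
  (forall p q, P p -> Q q -> centralizer S (g (t p q))) ->
  forall z, centralizer S (g z).
Proof.
move=> [_ [_ tuniq]] glin gPQ z s Ss.
apply: (tuniq W (fun z => g z * s) (fun z => s * g z)) => [||p q Pp Qq].
- exact: klinear_comp glin (klinear_mulr s).
- exact: klinear_comp glin (klinear_mull s).
exact: gPQ.
Qed.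

Lemma tensor_on_bijection (W : lmodType k) (R : W -> Prop) (g : T -> W)
    (h : W -> T) :
  is_tensor_on P Q t -> klinear g -> (forall z, R (g z)) -> linear_on R h ->
  (forall p q, P p -> Q q -> h (g (t p q)) = t p q) ->
  (forall w, R w -> g (h w) = w) ->
  injective g /\ (forall w, R w <-> exists z, g z = w).
Proof.
move=> [_ [_ tuniq]] glin gR hlin hg gh.
have hgK : cancel g h.
  apply: (tuniq T (fun z => h (g z)) id) => // c z z'.
  by rewrite glin hlin.
split=> [|w]; first exact: can_inj hgK.
by split=> [Rw | [z <-]]; [exists (h w); apply: gh | apply: gR].
Qed.

End TensorOn.

Section BalancedTensor.
Variables (k : fieldType) (R : algType k) (U : lmodType k).
Variables (S : R -> Prop) (t : R -> R -> U).
Hypothesis ht : is_balanced_tensor S t.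

Lemma balanced_tensor_linl b : klinear (fun a => t a b).
Proof. by case: ht => [[tl _] _] c a a'; apply: tl. Qed.

Lemma balanced_tensor_linr a : klinear (t a).
Proof. by case: ht => [[_ tr] _] c b b'; apply: tr. Qed.

Lemma balanced_tensor_bal s a b : S s -> t (a * s) b = t a (s * b).
Proof. by case: ht => [_ [tbal _]]; apply: tbal. Qed.

Lemma balanced_tensor_ext (W : lmodType k) (g1 g2 : U -> W) :
  klinear g1 -> klinear g2 -> (forall a b, g1 (t a b) = g2 (t a b)) -> g1 =1 g2.
Proof. by case: ht => [_ [_ [_ tuniq]]]; apply: tuniq. Qed.

Lemma balanced_tensor_mul :
  exists mu : U -> R, klinear mu /\ forall a b, mu (t a b) = a * b.
Proof.
case: ht => [_ [_ [tfac _]]]; apply: tfac => [|s a b _]; last by rewrite mulrA.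
by split=> c a a' b _ _ _; rewrite ?mulrDl ?mulrDr -?scalerAl -?scalerAr.
Qed.

End BalancedTensor.

Section BasicConstruction.
Variables (k : fieldType) (R : algType k) (S : R -> Prop) (ES : R -> R).
Variables (n : nat) (r s : 'I_n -> R) (lam : k).
Hypotheses (lam_neq0 : lam != 0) (ES_in : forall m, S (ES m))
  (dual1 : forall m, \sum_(i < n) ES (m * r i) * s i = m)
  (dual2 : forall m, \sum_(i < n) r i * ES (s i * m) = m).
Variables (R1 : algType k) (t : R -> R -> R1).
Hypotheses (ht : is_balanced_tensor S t)
  (tM : forall a b c d, t a b * t c d = t (a * ES (b * c)) d)
  (t1 : 1 = \sum_(i < n) t (r i) (s i)).
Variable ER : R1 -> R.
Hypotheses (ER_lin : klinear ER)
  (ER_t : forall a b, ER (t a b) = lam *: (a * b)).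

Local Notation incl := (bc_incl t r s).
Local Notation t_bal := (balanced_tensor_bal ht _ _ (ES_in _)).

Lemma bc_incl_mul_tensor a c d : incl a * t c d = t (a * c) d.
Proof.
rewrite /bc_incl mulr_suml; under eq_bigr do rewrite tM -mulrA.
by rewrite -(klinear_sum (balanced_tensor_linl ht d)) -mulr_sumr dual2.
Qed.

Lemma bc_tensor_mul_incl a b c : t a b * incl c = t a (b * c).
Proof.
rewrite /bc_incl mulr_sumr; under eq_bigr do rewrite tM t_bal mulrA.
by rewrite -(klinear_sum (balanced_tensor_linr ht a)) dual1.
Qed.

Lemma bc_inclM a b : incl (a * b) = incl a * incl b.
Proof.
rewrite [incl b]/bc_incl mulr_sumr /bc_incl.
by apply: eq_bigr => i _; rewrite bc_incl_mul_tensor mulrA.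
Qed.

Lemma bc_incl1 : incl 1 = 1.
Proof. by rewrite t1 /bc_incl; under eq_bigr do rewrite mul1r. Qed.

Lemma bc_incl_lin : klinear incl.
Proof.
apply: klinear_sumf => i c u v.
by rewrite mulrDl -scalerAl (balanced_tensor_linl ht).
Qed.

Lemma bc_dual1 v :
  \sum_(i < n) (lam^-1 *: t (r i) 1) * incl (ER (t 1 (s i) * v)) = v.
Proof.
move: v; apply: (balanced_tensor_ext ht) => // [|a b].
  apply: klinear_sumf => i; apply: klinear_comp (klinear_mull _).
  exact: klinear_comp (klinear_comp (klinear_mull _) ER_lin) bc_incl_lin.
under eq_bigr do rewrite tM ER_t (klinearZ bc_incl_lin) -scalerAl -scalerAr
  bc_tensor_mul_incl scalerA (mulVf lam_neq0) scale1r !mul1r -t_bal.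
by rewrite -(klinear_sum (balanced_tensor_linl ht b)) dual2.
Qed.

Lemma bc_dual2 v :
  \sum_(i < n) incl (ER (v * (lam^-1 *: t (r i) 1))) * t 1 (s i) = v.
Proof.
move: v; apply: (balanced_tensor_ext ht) => // [|a b].
  apply: klinear_sumf => i; apply: klinear_comp (klinear_mulr _).
  exact: klinear_comp (klinear_comp (klinear_mulr _) ER_lin) bc_incl_lin.
under eq_bigr do rewrite -scalerAr tM (klinearZ ER_lin) ER_t scalerA
  (mulVf lam_neq0) scale1r mulr1 bc_incl_mul_tensor mulr1 t_bal.
by rewrite -(klinear_sum (balanced_tensor_linr ht a)) dual1.
Qed.

Lemma bc_ER_incl_mull u w : ER (incl u * w) = u * ER w.
Proof.
move: w; apply: (balanced_tensor_ext ht) => [||a b].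
- exact: klinear_comp (klinear_mull _) ER_lin.
- exact: klinear_comp ER_lin (klinear_mull _).
by rewrite bc_incl_mul_tensor !ER_t -scalerAr mulrA.
Qed.

Lemma bc_ER_incl_mulr u w : ER (w * incl u) = ER w * u.
Proof.
move: w; apply: (balanced_tensor_ext ht) => [||a b].
- exact: klinear_comp (klinear_mulr _) ER_lin.
- exact: klinear_comp ER_lin (klinear_mulr _).
by rewrite bc_tensor_mul_incl !ER_t -scalerAl mulrA.
Qed.

Lemma bc_tensor1_inj a b : t a 1 = t b 1 -> a = b.
Proof.
by move=> /(congr1 ER); rewrite !ER_t !mulr1; apply: scalerI.
Qed.

Lemma bc_mul_jones u : u * t 1 1 = t (lam^-1 *: ER (u * t 1 1)) 1.
Proof.
move: u; apply: (balanced_tensor_ext ht) => [||a b].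
- exact: klinear_mulr.
- apply: klinear_comp (balanced_tensor_linl ht 1).
  apply: klinear_comp (klinear_comp (klinear_mulr _) ER_lin) _.
  by move=> c v w; rewrite scalerDr !scalerA mulrC.
by rewrite tM ER_t scalerA mulVf // scale1r !mulr1.
Qed.

Lemma bc_centralizer_scalar :
    (forall m, centralizer S m -> exists c : k, m = c%:A) ->
  forall u, centralizer (fun v => exists m, v = incl m) u ->
  exists c : k, u = c%:A.
Proof.
(* With e := t 1 1, the element u e equals w e; commuting with S forces w to be
   a scalar c, and then u = Σ_i incl (r i) (u e) incl (s i) = c. *)
move=> irr u cu; set w := lam^-1 *: ER (u * t 1 1).
have ue : u * t 1 1 = t w 1 := bc_mul_jones u.
have cu_incl m : u * incl m = incl m * u by apply: cu; exists m.
have incl_e a : incl a * t 1 1 = t a 1 by rewrite bc_incl_mul_tensor mulr1.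
have t_incl a b : t a 1 * incl b = t a b by rewrite bc_tensor_mul_incl mul1r.
have e_incl m : S m -> t 1 1 * incl m = incl m * t 1 1.
  move=> Sm; rewrite t_incl incl_e -{1}[m]mulr1.
  by rewrite -(balanced_tensor_bal ht _ _ Sm) mul1r.
have [|c wc] := irr w.
  move=> m Sm; apply: bc_tensor1_inj.
  rewrite (balanced_tensor_bal ht _ _ Sm) mulr1 -t_incl -ue -mulrA e_incl //.
  by rewrite mulrA cu_incl -mulrA ue bc_incl_mul_tensor.
exists c; rewrite -[u]mulr1 t1 mulr_sumr.
under eq_bigr => i _.
  have -> : u * t (r i) (s i) = incl (r i) * (u * t 1 1) * incl (s i).
    by rewrite -t_incl -incl_e !mulrA cu_incl.
  rewrite ue wc (klinearZ (balanced_tensor_linl ht 1)) -scalerAr -scalerAl.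
  rewrite incl_e t_incl.
  over.
by rewrite -scaler_sumr -t1.
Qed.

End BasicConstruction.

Lemma sum_count_mem (I : eqType) (V : nmodType) (S s : seq I) (F : I -> V) :
  uniq S -> {subset s <= S} ->
  \sum_(i <- s) F i = \sum_(i <- S) F i *+ count_mem i s.
Proof.
move=> uS; elim: s => [|a s IH] sS.
  by rewrite big_nil big1 // => i _; rewrite mulr0n.
rewrite big_cons IH => [|i si]; last by apply: sS; rewrite inE si orbT.
under [RHS]eq_bigr do rewrite /= mulrnDr.
rewrite big_split /=; congr (_ + _).
rewrite (bigD1_seq a) ?sS ?mem_head //= eqxx mulr1n big1 ?addr0 // => i.
by rewrite eq_sym => /negbTE ->; rewrite mulr0n.
Qed.

Lemma span_common_support (k : fieldType) (R V : algType k) (phi : R -> V)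
    (I : eqType) (b : I -> V) :
  klinear phi ->
  (forall u, exists (s : seq I) (c : I -> R),
     u = \sum_(i <- s) b i * phi (c i)) ->
  forall (J : eqType) (F : J -> V) (ls : seq J), exists S : seq I, uniq S /\
    exists c : J -> I -> R,
      forall l, l \in ls -> F l = \sum_(i <- S) b i * phi (c l i).
Proof.
move=> phi_lin span J F; elim=> [|l ls [S [uS [c Fc]]]].
  by exists [::]; split=> //; exists (fun _ _ => 0).
have [s [cl Fl]] := span (F l); exists (undup (S ++ s)).
split; first exact: undup_uniq.
have extend (s' : seq I) (c' : I -> R) : {subset s' <= S ++ s} ->
    \sum_(i <- s') b i * phi (c' i)
    = \sum_(i <- undup (S ++ s)) b i * phi (c' i *+ count_mem i s').
  move=> s'Ss; rewrite (sum_count_mem _ (undup_uniq (S ++ s))) => [|i /s'Ss];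
    last by rewrite mem_undup.
  apply: eq_bigr => i _; rewrite -mulrnAr -!scaler_nat.
  by rewrite (klinearZ phi_lin).
exists (fun l' i => if l' == l then cl i *+ count_mem i s
                   else c l' i *+ count_mem i S) => l'.
rewrite inE; case: eqP => [-> _|_ /= l'ls].
  by rewrite Fl extend // => i si; rewrite mem_cat si orbT.
by rewrite Fc // extend // => i Si; rewrite mem_cat Si.
Qed.

(* Applied with R1 = M_1, R2 = M_2, j = i_1, iota = i_2 and E = E_{M_1}. *)
Section Depth2.
Variables (k : fieldType) (M : Type) (N : M -> Prop) (R1 R2 : algType k).
Variables (j : M -> R1) (iota : R1 -> R2) (E : R2 -> R1).
Hypotheses (iota_lin : klinear iota) (iota1 : iota 1 = 1)
  (iotaM : forall u v, iota (u * v) = iota u * iota v).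
Hypotheses (E_lin : klinear E) (E_iotal : forall u w, E (iota u * w) = u * E w)
  (E_iotar : forall u w, E (w * iota u) = E w * u).
Variables (n : nat) (p q : 'I_n -> R2).
Hypotheses (dual1 : forall w, \sum_(l < n) p l * iota (E (q l * w)) = w)
  (dual2 : forall w, \sum_(l < n) iota (E (w * p l)) * q l = w).
Hypothesis irr1 : forall v,
  centralizer (fun s => exists m, s = j m) v -> exists c : k, v = c%:A.

Local Notation A := (centralizer (fun s => exists m, N m /\ s = j m)).
Local Notation B := (centralizer (fun s => exists m, s = iota (j m))).
Local Notation C := (centralizer (fun s => exists m, N m /\ s = iota (j m))).

Lemma iota_scalar (c : k) : iota c%:A = c%:A.
Proof. by rewrite (klinearZ iota_lin) iota1. Qed.

Lemma E_nondeg d : (forall w, E (d * w) = 0) -> d = 0.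
Proof.
move=> dE0; rewrite -(dual2 d) big1 // => l _.
by rewrite dE0 (klinear0 iota_lin) mul0r.
Qed.

Lemma E_B_scalar b : B b -> exists c : k, E b = c%:A.
Proof.
move=> Bb; apply: irr1 => _ [m ->].
by rewrite -E_iotar Bb ?E_iotal //; exists m.
Qed.

Lemma iotaE_B b : B b -> B (iota (E b)).
Proof.
by move=> /E_B_scalar [c ->]; rewrite iota_scalar; apply: centralizer_scalar.
Qed.

Lemma B_sub_C b : B b -> C b.
Proof. by apply: centralizerS => _ [m [_ ->]]; exists m. Qed.

Lemma iota_A_C a : A a -> C (iota a).
Proof. by move=> Aa _ [m [Nm ->]]; rewrite -!iotaM Aa //; exists m. Qed.

Lemma E_mulCB_A w b : C w -> B b -> A (E (w * b)).
Proof.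
move=> Cw Bb _ [m [Nm ->]]; rewrite -E_iotar -E_iotal -mulrA (Bb (iota (j m))).
  by rewrite mulrA (Cw (iota (j m))) ?mulrA //; exists m.
by exists m.
Qed.

Lemma E_mulBC_A b w : B b -> C w -> A (E (b * w)).
Proof.
move=> Bb Cw _ [m [Nm ->]]; rewrite -E_iotar -E_iotal -mulrA (Cw (iota (j m))).
  by rewrite mulrA (Bb (iota (j m))) -?mulrA //; exists m.
by exists m.
Qed.

Lemma quasi_basis_of_coords (I : Type) (S : seq I) (b : I -> R2)
    (c : 'I_n -> I -> R1) :
  (forall l, p l = \sum_(i <- S) b i * iota (c l i)) ->
  forall w, w = \sum_(i <- S)
    b i * iota (E ((\sum_(l < n) iota (c l i) * q l) * w)).
Proof.
move=> pc w; rewrite -{1}(dual1 w).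
under eq_bigr do rewrite pc mulr_suml.
rewrite exchange_big /=; apply: eq_bigr => i _.
rewrite mulr_suml (klinear_sum E_lin) (klinear_sum iota_lin) mulr_sumr.
by apply: eq_bigr => l _; rewrite -[_ * q l * w]mulrA E_iotal iotaM mulrA.
Qed.

Lemma coords_centralize (I : eqType) (S : seq I) (b D : I -> R2) :
  free_right_basis iota b -> uniq S -> (forall i, B (b i)) ->
  (forall w, w = \sum_(i <- S) b i * iota (E (D i * w))) ->
  forall i, i \in S -> B (D i).
Proof.
(* For s in the image of M, the free coordinates of (D i s - s D i) w vanish
   because the b i commute with s; nondegeneracy of E gives D i s = s D i. *)
move=> [_ free] uS bB bD i iS _ [m ->].
apply/eqP; rewrite -subr_eq0; apply/eqP; apply: E_nondeg => w.
apply: (free S (fun i => E ((D i * _ - _ * D i) * w)) uS _ i iS).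
rewrite (eq_bigr (fun i => b i * iota (E (D i * (iota (j m) * w)))
  - iota (j m) * (b i * iota (E (D i * w))))) => [|i' _].
  by rewrite big_split /= sumrN -mulr_sumr -!bD subrr.
rewrite mulrBl (klinearB E_lin) (klinearB iota_lin) mulrBr.
rewrite -!mulrA E_iotal iotaM.
by rewrite !mulrA (bB i' (iota (j m))) //; exists m.
Qed.

Hypothesis depth2 : exists (I : eqType) (b : I -> R2),
  free_right_basis iota b /\ forall i, B (b i).

Lemma right_quasi_basis : exists (I : eqType) (S : seq I) (bb D : I -> R2),
  (forall i, B (bb i)) /\ (forall i, B (D i)) /\
  forall w, w = \sum_(i <- S) bb i * iota (E (D i * w)).
Proof.
have [I [b [[span free] bB]]] := depth2.
have [S [uS [c pc]]] := span_common_support iota_lin span p (enum 'I_n).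
have bD := quasi_basis_of_coords (c := c) (fun l => pc l (mem_enum _ _)).
have DB := coords_centralize (conj span free) uS bB bD.
have B0 := (centralizer_subspace (fun s => exists m, s = iota (j m))).1.
(* Indices outside S get 0, which lies in B. *)
exists I, S, (fun i => if i \in S then b i else 0).
exists (fun i => if i \in S then \sum_(l < n) iota (c l i) * q l else 0).
split=> [i|]; first by case: ifP.
split=> [i|w]; first by case: ifP => // /DB.
by rewrite {1}(bD w); apply: eq_big_seq => i ->.
Qed.

Lemma left_quasi_basis (I : Type) (S : seq I) (bb D : I -> R2) :
  (forall w, w = \sum_(i <- S) bb i * iota (E (D i * w))) ->
  forall w, w = \sum_(i <- S) iota (E (w * bb i)) * D i.
Proof.
move=> bD w; rewrite -[RHS]dual2 -{1}(dual2 w).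
apply: eq_bigr => l _; congr (iota _ * _).
rewrite {1}(bD (p l)) mulr_sumr mulr_suml !(klinear_sum E_lin).
by apply: eq_bigr => i _; rewrite mulrA E_iotar -mulrA E_iotal.
Qed.

Local Notation linZ := (linear_onZ (centralizer_subspace _)).

Lemma mul_tensor_BA_bij (T : lmodType k) (t : R2 -> R1 -> T) :
  is_tensor_on B A t -> forall g : T -> R2, klinear g ->
  (forall b a, B b -> A a -> g (t b a) = b * iota a) ->
  injective g /\ (forall w, C w <-> exists z, g z = w).
Proof.
move=> tBA g g_lin gt; have tbil := tBA.1.
have [I [S [bb [D [bbB [DB bD]]]]]] := right_quasi_basis.
have gC : forall z, C (g z).
  apply: (tensor_on_centralizer tBA g_lin) => b a Bb Aa.
  by rewrite gt //; apply: centralizerM (B_sub_C Bb) (iota_A_C Aa).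
apply: (tensor_on_bijection (h := fun w => \sum_(i <- S) t (bb i) (E (D i * w)))
  tBA g_lin gC) => [c u v Cu Cv|b a Bb Aa|w Cw].
- rewrite scaler_sumr -big_split; apply: eq_bigr => i _ /=.
  rewrite mulrDr -scalerAr (klinearD E_lin) (klinearZ E_lin).
  by rewrite (kbilinear_on_linr tbil (bbB i)) //; apply: E_mulBC_A.
- have bDbB i : B (bb i * iota (E (D i * b))).
    exact: centralizerM (bbB i) (iotaE_B (centralizerM (DB i) Bb)).
  rewrite gt // {2}(bD b) (linear_on_sum (centralizer_subspace _)
    (kbilinear_on_linl tbil Aa) _ bDbB).
  apply: eq_bigr => i _; rewrite mulrA E_iotar.
  have [c ->] := E_B_scalar (centralizerM (DB i) Bb).
  rewrite mulr_algl iota_scalar mulr_algr.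
  by rewrite (linZ (kbilinear_on_linr tbil (bbB i)) c Aa)
    (linZ (kbilinear_on_linl tbil Aa) c (bbB i)).
- rewrite /= (klinear_sum g_lin) {2}(bD w); apply: eq_bigr => i _.
  by apply: gt; [apply: bbB | apply: E_mulBC_A].
Qed.

Lemma mul_tensor_AB_bij (T : lmodType k) (t : R1 -> R2 -> T) :
  is_tensor_on A B t -> forall g : T -> R2, klinear g ->
  (forall a b, A a -> B b -> g (t a b) = iota a * b) ->
  injective g /\ (forall w, C w <-> exists z, g z = w).
Proof.
move=> tAB g g_lin gt; have tbil := tAB.1.
have [I [S [bb [D [bbB [DB /left_quasi_basis bD]]]]]] := right_quasi_basis.
have gC : forall z, C (g z).
  apply: (tensor_on_centralizer tAB g_lin) => a b Aa Bb.
  by rewrite gt //; apply: centralizerM (iota_A_C Aa) (B_sub_C Bb).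
apply: (tensor_on_bijection (h := fun w => \sum_(i <- S) t (E (w * bb i)) (D i))
  tAB g_lin gC) => [c u v Cu Cv|a b Aa Bb|w Cw].
- rewrite scaler_sumr -big_split; apply: eq_bigr => i _ /=.
  rewrite mulrDl -scalerAl (klinearD E_lin) (klinearZ E_lin).
  by rewrite (kbilinear_on_linl tbil (DB i)) //; apply: E_mulCB_A.
- have EbbDB i : B (iota (E (b * bb i)) * D i).
    exact: centralizerM (iotaE_B (centralizerM Bb (bbB i))) (DB i).
  rewrite gt // {2}(bD b) (linear_on_sum (centralizer_subspace _)
    (kbilinear_on_linr tbil Aa) _ EbbDB).
  apply: eq_bigr => i _; rewrite -mulrA E_iotal.
  have [c ->] := E_B_scalar (centralizerM Bb (bbB i)).
  rewrite mulr_algr iota_scalar mulr_algl.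
  by rewrite (linZ (kbilinear_on_linl tbil (DB i)) c Aa)
    (linZ (kbilinear_on_linr tbil Aa) c (DB i)).
- rewrite /= (klinear_sum g_lin) {2}(bD w); apply: eq_bigr => i _.
  by apply: gt; [apply: E_mulCB_A | apply: DB].
Qed.

End Depth2.

Theorem lemma3p4
  (k : fieldType) (M : algType k)
  (* N is a k-subalgebra of M *)
  (N : M -> Prop)
  (hN1 : N 1)
  (hNlin : forall (c : k) u v, N u -> N v -> N (c *: u + v))
  (hNmul : forall u v, N u -> N v -> N (u * v))
  (* irreducible: C_M(N) = k1 *)
  (hirr : forall m : M, centralizer N m <-> exists c : k, m = c%:A)
  (* E : M -> N an N-bimodule map, normalized E(1) = 1 *)
  (E : M -> M)
  (hEN : forall m, N (E m))
  (hEadd : forall m m', E (m + m') = E m + E m')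
  (hEl : forall n m, N n -> E (n * m) = n * E m)
  (hEr : forall n m, N n -> E (m * n) = E m * n)
  (hE1 : E 1 = 1)
  (* dual bases, sum_i x_i y_i = lam^-1 1 *)
  (n : nat) (x y : 'I_n -> M) (lam : k) (hlam : lam != 0)
  (hdual1 : forall m, \sum_(i < n) E (m * x i) * y i = m)
  (hdual2 : forall m, \sum_(i < n) x i * E (y i * m) = m)
  (hxy : \sum_(i < n) x i * y i = lam^-1%:A)
  (* basic construction M_1 = M (x)_N M, with its algebra structure *)
  (M1 : algType k) (tau : M -> M -> M1)
  (htau : is_balanced_tensor N tau)
  (htaumul : forall a b c d, tau a b * tau c d = tau (a * E (b * c)) d)
  (htau1 : 1 = \sum_(i < n) tau (x i) (y i))
  (* E_M : M_1 -> M, a (x) b |-> lam a b *)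
  (EM : M1 -> M) (hEMlin : klinear EM)
  (hEM : forall a b, EM (tau a b) = lam *: (a * b))
  (* basic construction M_2 = M_1 (x)_M M_1 for (M in M_1, E_M) *)
  (M2 : algType k) (sig : M1 -> M1 -> M2)
  (hsig : is_balanced_tensor
            (fun s => exists m, s = bc_incl tau x y m) sig)
  (hsigmul : forall a b c d,
      sig a b * sig c d = sig (a * bc_incl tau x y (EM (b * c))) d)
  (hsig1 : 1 = \sum_(i < n) sig (lam^-1 *: tau (x i) 1) (tau 1 (y i)))
  (* depth 2 *)
  (hd2a : exists (I : eqType) (b : I -> M1),
      free_right_basis (bc_incl tau x y) b /\
      forall i, centralizer (fun s => exists m, N m /\ s = bc_incl tau x y m) (b i))
  (hd2b : exists (I : eqType) (b : I -> M2),
      free_right_basis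
        (bc_incl sig (fun i => lam^-1 *: tau (x i) 1) (fun i => tau 1 (y i))) b /\
      forall i, centralizer (fun s => exists m,
          s = bc_incl sig (fun i => lam^-1 *: tau (x i) 1) (fun i => tau 1 (y i))
                (bc_incl tau x y m)) (b i)) :
  let i1 := bc_incl tau x y in
  let i2 := bc_incl sig (fun i => lam^-1 *: tau (x i) 1) (fun i => tau 1 (y i)) in
  let A := centralizer (fun s => exists m, N m /\ s = i1 m) in
  let B := centralizer (fun s => exists m, s = i2 (i1 m)) in
  let C := centralizer (fun s => exists m, N m /\ s = i2 (i1 m)) in
  (* A (x)_k B -> C, a (x) b |-> ab, is a linear isomorphism *)
  (forall (T : lmodType k) (t : M1 -> M2 -> T), is_tensor_on A B t ->
     forall g : T -> M2, klinear g ->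
     (forall a b, A a -> B b -> g (t a b) = i2 a * b) ->
     injective g /\ (forall w, C w <-> exists z, g z = w)) /\
  (* B (x)_k A -> C, b (x) a |-> ba, is a linear isomorphism *)
  (forall (T : lmodType k) (t : M2 -> M1 -> T), is_tensor_on B A t ->
     forall g : T -> M2, klinear g ->
     (forall b a, B b -> A a -> g (t b a) = b * i2 a) ->
     injective g /\ (forall w, C w <-> exists z, g z = w)).
Proof.
move=> i1 i2 A B C.
pose X i := lam^-1 *: tau (x i) 1; pose Y i := tau 1 (y i).
pose ES1 v := i1 (EM v).
have ES1_in v : exists m, ES1 v = i1 m by exists (EM v).
have M1_dual1 : forall v, \sum_(i < n) X i * ES1 (Y i * v) = v :=
  bc_dual1 hlam hEN hdual1 hdual2 htau htaumul hEMlin hEM.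
have M1_dual2 : forall v, \sum_(i < n) ES1 (v * X i) * Y i = v :=
  bc_dual2 hlam hEN hdual1 hdual2 htau htaumul hEMlin hEM.
have M1_irr := bc_centralizer_scalar hlam hEN hdual1 hdual2 htau htaumul htau1
  hEMlin hEM (fun m => (hirr m).1).
have [mu [mu_lin mu_sig]] := balanced_tensor_mul hsig.
pose E2 w := lam *: mu w.
have E2_lin : klinear E2.
  by move=> c u v; rewrite /E2 mu_lin scalerDr !scalerA mulrC.
have E2_sig a b : E2 (sig a b) = lam *: (a * b) by rewrite /E2 mu_sig.
have M2_dual1 :=
  bc_dual1 hlam ES1_in M1_dual2 M1_dual1 hsig hsigmul E2_lin E2_sig.
have M2_dual2 :=
  bc_dual2 hlam ES1_in M1_dual2 M1_dual1 hsig hsigmul E2_lin E2_sig.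
have i2_lin : klinear i2 := bc_incl_lin _ _ hsig.
have i2_1 : i2 1 = 1 := bc_incl1 hsig1.
have i2M := bc_inclM M1_dual1 hsig hsigmul.
have E2_i2l := bc_ER_incl_mull M1_dual1 hsig hsigmul E2_lin E2_sig.
have E2_i2r := bc_ER_incl_mulr ES1_in M1_dual2 hsig hsigmul E2_lin E2_sig.
split.
- exact: (mul_tensor_AB_bij i2_lin i2_1 i2M E2_lin E2_i2l E2_i2r
    M2_dual1 M2_dual2 M1_irr hd2b).
- exact: (mul_tensor_BA_bij i2_lin i2_1 i2M E2_lin E2_i2l E2_i2r
    M2_dual1 M2_dual2 M1_irr hd2b).
Qed.
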